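(* Let $f:X\to X$ be a nonuniformly expanding map with induced map $F=f^r:Y\to Y$, expansion constant $\lambda>1$, and $\operatorname{diam}(Y)\le1$. Let $v:X\to\mathbb{R}$ be $C^\eta$ with $\eta\in(0,1]$, and set $\theta=\lambda^{-\eta}$. Then: - $V_\omega\in F_\theta^{\rm loc}(Y)$ for all $\omega\in[0,2\pi]$; - there is a constant $C\ge1$ such that $D_\theta V_\omega(a)\le C|v|_\eta r(a)$ for all $\omega\in[0,2\pi]$ and $a\in\alpha$.
   Context: Nonuniformly expanding map: $(X,d)$ is a locally compact separable bounded metric space with Borel probability measure $m_0$, and $f:X\to X$ is nonsingular with $m_0$ ergodic. $Y\subset X$ is measurable with $m_0(Y)>0$, and $\alpha$ is an at most countable measurable partition of $Y$. $r:Y\to\mathbb{Z}^+$ is integrable and constant on each $a\in\alpha$ (value $r(a)$). There are constants $\lambda>1$, $\eta_0\in(0,1)$, $C_0\ge1$ such that for each $a\in\alpha$: (1) $F=f^{r(a)}:a\to Y$ is a measure-theoretic bijection; (2) $d(Fx,Fy)\ge\lambda d(x,y)$ for $x,y\in a$; (3) $d(f^\ell x,f^\ell y)\le C_0d(Fx,Fy)$ for $x,y\in a$ and $0\le\ell<r(a)$; (4) $g_a=d(m_0|_a\circ F^{-1})/dm_0|_Y$ satisfies $|\log g_a(x)-\log g_a(y)|\le C_0d(x,y)^{\eta_0}$ on $Y$. $d$ is rescaled so that $\operatorname{diam}(Y)\le1$. Symbolic metric: the $n$-cylinders are $\bigcap_{j=0}^{n-1}F^{-j}a_j$ with $a_j\in\alpha$.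 The separation time $s(x,y)$ is the least $n\ge0$ such that $x,y$ lie in distinct $n$-cylinders, and $d_\theta(x,y)=\theta^{s(x,y)}$. A function $\phi:Y\to\mathbb{C}$ is locally Lipschitz, written $\phi\in F_\theta^{\rm loc}(Y)$, if for each $a\in\alpha$, $D_\theta\phi(a)=\sup_{x,y\in a,x\ne y}|\phi(x)-\phi(y)|/d_\theta(x,y)<\infty$ and $\phi|_a$ is bounded. $|v|_\eta=\sup_{x\ne y}|v(x)-v(y)|/d(x,y)^\eta$. $V_\omega(y)=\sum_{\ell=0}^{r(y)-1}e^{i\ell\omega}v(f^\ell y)$. *)

From HB Require Import structures.
From mathcomp Require Import all_boot all_order all_algebra.
From mathcomp Require Import all_classical all_reals all_analysis.
From mathcomp.real_closed Require Import complex.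
Set Implicit Arguments. Unset Strict Implicit. Unset Printing Implicit Defensive.
Import Order.TTheory GRing.Theory Num.Theory.
Local Open Scope classical_set_scope.
Local Open Scope ring_scope.

Section MetricNotions.
Context {R : realType} {X : Type}.
Variable d : X -> X -> R.

Definition is_metric : Prop :=
  [/\ (forall x y, 0 <= d x y), (forall x y, d x y = 0 <-> x = y),
      (forall x y, d x y = d y x) & (forall x y z, d x z <= d x y + d y z)].

Definition dball (x : X) (e : R) : set X := [set y | d x y < e].

Definition dopen (U : set X) : Prop :=
  forall x, U x -> exists2 e : R, 0 < e & dball x e `<=` U.

Definition dcompact (K : set X) : Prop :=
  forall (I : Type) (U : I -> set X), (forall i, dopen (U i)) ->
    K `<=` \bigcup_i U i ->
    exists (n : nat) (s : 'I_n -> I), K `<=` \bigcup_k U (s k).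

Definition dlocally_compact : Prop :=
  forall x, exists K, dcompact K /\ exists2 e : R, 0 < e & dball x e `<=` K.

Definition dseparable : Prop :=
  exists D : set X, countable D /\
    forall x (e : R), 0 < e -> exists2 y, D y & dball x e y.

Definition bounded_metric : Prop := exists M : R, forall x y, d x y <= M.

Definition holder_seminorm (eta : R) (v : X -> R) : \bar R :=
  ereal_sup [set z | exists x y, x <> y /\
                     z = (`|v x - v y| / (d x y) `^ eta)%:E].

Definition Holder (eta : R) (v : X -> R) : Prop :=
  (exists M : R, forall x, `|v x| <= M) /\
  (holder_seminorm eta v < +oo)%E.

End MetricNotions.

Section InducedMap.
Context {R : realType} {X : Type}.
Variables (f : X -> X) (r : X -> nat) (alpha : set (set X)).

Definition Find (y : X) : X := iter (r y) f y.

Definition same_cyl (n : nat) (x y : X) : Prop :=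
  exists a_ : nat -> set X, forall j, (j < n)%N ->
    [/\ alpha (a_ j), a_ j (iter j Find x) & a_ j (iter j Find y)].

(* symbolic metric d_theta(x,y) = theta^{s(x,y)}, s(x,y) the separation time
   (least n such that x, y lie in distinct n-cylinders); if no such n exists
   (s = oo), d_theta = theta^oo = 0. *)
Definition dtheta (theta : R) (x y : X) : R :=
  match pselect (exists n, ~ same_cyl n x y) with
  | left h =>
      theta ^+ (ex_minn (P := fun n => `[< ~ same_cyl n x y >])
                  (let: ex_intro n hn := h in ex_intro _ n (asboolT hn)))
  | right _ => 0
  end.

Definition Dtheta (theta : R) (phi : X -> R[i]) (a : set X) : \bar R :=
  ereal_sup [set z | exists x y, [/\ a x, a y, x <> y &
                     z = (Normc.normc (phi x - phi y) / dtheta theta x y)%:E]].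

Definition locLip (theta : R) (phi : X -> R[i]) : Prop :=
  forall a, alpha a ->
    (Dtheta theta phi a < +oo)%E /\
    exists M : R, forall x, a x -> Normc.normc (phi x) <= M.

End InducedMap.

Definition Vomega {R : realType} {X : Type} (f : X -> X) (r : X -> nat)
  (v : X -> R) (omega : R) (y : X) : R[i] :=
  \sum_(l < r y) (Complex (cos (l%:R * omega)) (sin (l%:R * omega)) *
                  Complex (v (iter l f y)) 0).

Section MeasureNotions.
Context {dX : measure_display} {X : measurableType dX} {R : realType}.
Variable m0 : {measure set X -> \bar R}.

Definition nonsingular (f : X -> X) : Prop :=
  measurable_fun setT f /\
  forall A, measurable A -> (m0 (f @^-1` A) = 0 <-> m0 A = 0)%E.

Definition ergodic (f : X -> X) : Prop :=
  forall A, measurable A -> f @^-1` A = A -> (m0 A = 0 \/ m0 A = 1)%E.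

Definition mt_bijection (F : X -> X) (a Y : set X) : Prop :=
  exists a' Y' : set X,
    [/\ measurable a', a' `<=` a & m0 (a `\` a') = 0%E] /\
    [/\ measurable Y', Y' `<=` Y & m0 (Y `\` Y') = 0%E] /\
    [/\ {in a' &, injective F}, F @` a' = Y',
        measurable_fun a' F &
        forall A, measurable A -> A `<=` a' -> measurable (F @` A)].

(* g is (a version of) the Radon-Nikodym derivative
   d(m0|_a o F^{-1}) / d(m0|_Y) *)
Definition is_density (F : X -> X) (a Y : set X) (g : X -> R) : Prop :=
  measurable_fun Y g /\ (forall y, Y y -> 0 <= g y) /\
  forall A, measurable A -> A `<=` Y ->
    m0 (a `&` F @^-1` A) = (\int[m0]_(y in A) (g y)%:E)%E.

End MeasureNotions.

From Pilot Require Import Defs.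
From HB Require Import structures.
From mathcomp Require Import all_boot all_order all_algebra.
From mathcomp Require Import all_classical all_reals all_analysis.
From mathcomp.real_closed Require Import complex.
From mathcomp Require Import ring.
Set Implicit Arguments. Unset Strict Implicit. Unset Printing Implicit Defensive.
Import Order.TTheory GRing.Theory Num.Theory.
Local Open Scope classical_set_scope.
Local Open Scope ring_scope.

(** Each summand of [V_omega x - V_omega y] is bounded, via (3) and the
    Hoelder bound, by [|v|_eta (C0 d(Fx,Fy))^eta], so the difference is at
    most [r(a) |v|_eta C0^eta d(Fx,Fy)^eta].  If [x, y] in [a] have separation
    time [s], then [s >= 2] and [F^j x, F^j y] share a partition element for
    [j <= s - 2], so iterating (2) gives
    [lambda^(s-2) d(Fx,Fy) <= d(F^(s-1) x, F^(s-1) y) <= diam X]; that is,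
    [d(Fx,Fy)^eta <= lambda^(2 eta) (diam X)^eta d_theta(x,y)]. *)

Section RealComplexBounds.
Variable R : realType.

Lemma normc_sum n (F : 'I_n -> R[i]) :
  Normc.normc (\sum_(l < n) F l) <= \sum_(l < n) Normc.normc (F l).
Proof.
elim/big_ind2 : _ => [|x1 x2 y1 y2 le1 le2|//]; first by rewrite Normc.normc0.
by apply: le_trans (le_normcD _ _) _; exact: lerD.
Qed.

Lemma normc_expi (t : R) : Normc.normc (Complex (cos t) (sin t)) = 1.
Proof. by rewrite /Normc.normc cos2Dsin2 sqrtr1. Qed.

Lemma normc_real (a : R) : Normc.normc (Complex a 0) = `|a|.
Proof. by rewrite /Normc.normc expr0n /= addr0 sqrtr_sqr. Qed.

Lemma normc_real_sub (a b : R) :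
  Normc.normc (Complex a 0 - Complex b 0) = `|a - b|.
Proof. by rewrite -normc_real /= subr0. Qed.

Lemma powR_exprn (a e : R) n : 0 <= a -> (a ^+ n) `^ e = (a `^ e) ^+ n.
Proof. by move=> a_ge0; rewrite -powR_mulrn // powRAC powR_mulrn // powR_ge0. Qed.

End RealComplexBounds.

Section VomegaSums.
Variables (R : realType) (X : Type) (f : X -> X) (r : X -> nat) (v : X -> R).
Variable omega : R.

Lemma normc_Vomega_le (Mv : R) x :
  (forall p, `|v p| <= Mv) -> Normc.normc (Vomega f r v omega x) <= (r x)%:R * Mv.
Proof.
move=> v_le; rewrite /Vomega; apply: le_trans; first exact: normc_sum.
apply: (le_trans (y := \sum_(l < r x) Mv)).
  by apply: ler_sum => l _; rewrite Normc.normcM normc_expi mul1r normc_real.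
by rewrite sumr_const card_ord mulr_natl.
Qed.

Lemma normc_Vomega_sub_le (b : R) x y : r x = r y ->
  (forall l, (l < r x)%N -> `|v (iter l f x) - v (iter l f y)| <= b) ->
  Normc.normc (Vomega f r v omega x - Vomega f r v omega y) <= (r x)%:R * b.
Proof.
move=> rxy v_le; rewrite /Vomega -rxy -sumrB.
apply: le_trans; first exact: normc_sum.
apply: (le_trans (y := \sum_(l < r x) b)); last first.
  by rewrite sumr_const card_ord mulr_natl.
apply: ler_sum => l _.
by rewrite -mulrBr Normc.normcM normc_expi mul1r normc_real_sub v_le.
Qed.

End VomegaSums.

Section SeparationTime.
Variables (R : realType) (X : Type) (f : X -> X) (r : X -> nat).
Variable alpha : set (set X).
Local Notation F := (Find f r).
Local Notation same_cyl := (same_cyl f r alpha).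
Local Notation dtheta := (dtheta f r alpha).

Lemma dtheta_cases (theta : R) x y :
  dtheta theta x y = 0 \/
  exists2 s, dtheta theta x y = theta ^+ s &
    ~ same_cyl s x y /\ forall n, (n < s)%N -> same_cyl n x y.
Proof.
rewrite /Defs.dtheta; case: pselect => [sep|_]; last by left.
right; case: ex_minnP => s /asboolP not_cyl_s s_min; exists s => //.
split=> // n lt_ns; apply: contrapT => not_cyl_n.
by have := s_min n (asboolT not_cyl_n); rewrite leqNgt lt_ns.
Qed.

Lemma dtheta_ge0 (theta : R) x y : 0 <= theta -> 0 <= dtheta theta x y.
Proof.
move=> theta_ge0.
by case: (dtheta_cases theta x y) => [->|[s -> _]]; rewrite ?exprn_ge0.
Qed.

Lemma same_cyl_le m n x y : (m <= n)%N -> same_cyl n x y -> same_cyl m x y.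
Proof.
move=> le_mn [a_ cyl]; exists a_ => j lt_jm.
exact: cyl (leq_trans lt_jm le_mn).
Qed.

Lemma same_cyl1 a x y : alpha a -> a x -> a y -> same_cyl 1 x y.
Proof. by move=> alpha_a ax ay; exists (fun=> a) => -[|]. Qed.

Variables (d : X -> X -> R) (lambda : R).
Hypothesis lambda_ge0 : 0 <= lambda.
Hypothesis expand : forall a, alpha a -> forall x y, a x -> a y ->
  lambda * d x y <= d (F x) (F y).

Lemma same_cyl_expand k x y : same_cyl k.+1 x y ->
  lambda ^+ k * d (F x) (F y) <= d (iter k.+1 F x) (iter k.+1 F y).
Proof.
elim: k => [|k IH] cyl; first by rewrite expr0 mul1r.
have [a_ /(_ k.+1 (ltnSn _)) [alpha_a ax ay]] := cyl.
rewrite exprS -mulrA; apply: le_trans _ (expand alpha_a ax ay).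
by rewrite ler_wpM2l // IH //; apply: same_cyl_le cyl.
Qed.

End SeparationTime.

Lemma is_metric_gt0 (R : realType) (X : Type) (d : X -> X -> R) x y :
  is_metric d -> x <> y -> 0 < d x y.
Proof.
case=> d_ge0 d_eq0 _ _ xy.
by rewrite lt_neqAle d_ge0 andbT eq_sym; apply/eqP => /d_eq0.
Qed.

Section HolderSeminorm.
Variables (R : realType) (X : Type) (d : X -> X -> R) (eta : R) (v : X -> R).
Hypothesis d_gt0 : forall x y, x <> y -> 0 < d x y.
Local Notation hs := (holder_seminorm d eta v).

Lemma holder_ratio_le (x y : X) :
  x <> y -> ((`|v x - v y| / d x y `^ eta)%:E <= hs)%E.
Proof. by move=> xy; apply: ereal_sup_ubound; exists x, y. Qed.

Lemma holder_seminorm_real (x y : X) : x <> y -> (hs < +oo)%E ->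
  exists2 h : R, 0 <= h & hs = h%:E.
Proof.
move=> xy; move: (holder_ratio_le xy); case: hs => [h| |]; last 2 first.
- by rewrite ltxx.
- by rewrite leeNy_eq.
rewrite lee_fin => ratio_le _; exists h => //.
by apply: le_trans ratio_le; rewrite divr_ge0 ?powR_ge0.
Qed.

Lemma holder_le (h : R) : 0 <= h -> (hs <= h%:E)%E ->
  forall p q, `|v p - v q| <= h * d p q `^ eta.
Proof.
move=> h_ge0 hs_le p q; have [->|pq] := pselect (p = q).
  by rewrite subrr normr0 mulr_ge0 ?powR_ge0.
have := le_trans (holder_ratio_le pq) hs_le.
by rewrite lee_fin ler_pdivrMr // powR_gt0 // d_gt0.
Qed.

End HolderSeminorm.

Section VomegaLipschitz.
Variables (R : realType) (X : Type) (d : X -> X -> R) (f : X -> X) (r : X -> nat).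
Variables (alpha : set (set X)) (lambda C0 M eta : R) (v : X -> R).
Local Notation F := (Find f r).
Local Notation dtheta := (dtheta f r alpha (lambda `^ (- eta))).
Hypotheses (d_ge0 : forall x y, 0 <= d x y) (d_le : forall x y, d x y <= M).
Hypotheses (lambda_gt1 : 1 < lambda) (eta_gt0 : 0 < eta) (C0_ge0 : 0 <= C0).
Hypothesis r_cst : forall a, alpha a -> forall x y, a x -> a y -> r x = r y.
Hypothesis expand : forall a, alpha a -> forall x y, a x -> a y ->
  lambda * d x y <= d (F x) (F y).
Hypothesis distortion : forall a, alpha a -> forall x y, a x -> a y ->
  forall l, (l < r x)%N -> d (iter l f x) (iter l f y) <= C0 * d (F x) (F y).

Let lambda_ge0 : 0 <= lambda. Proof. exact: le_trans ler01 (ltW lambda_gt1). Qed.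
Let eta_ge0 : 0 <= eta. Proof. exact: ltW. Qed.

(* If [x] and [y] are never separated, [dtheta x y = 0] and the quotient
   is [0]. *)
Lemma dist_F_powR_div_dtheta_le a x y : alpha a -> a x -> a y ->
  d (F x) (F y) `^ eta / dtheta x y <= M `^ eta * (lambda `^ eta) ^+ 2.
Proof.
move=> alpha_a ax ay; have M_ge0 : 0 <= M := le_trans (d_ge0 x x) (d_le x x).
case: (dtheta_cases f r alpha (lambda `^ (- eta)) x y) => [->|[s ->]].
  by rewrite invr0 mulr0 mulr_ge0 ?exprn_ge0 ?powR_ge0.
case: s => [|[|t]] [not_cyl cyl].
- by case: not_cyl; apply: same_cyl_le _ (same_cyl1 f r alpha_a ax ay).
- by case: not_cyl; apply: same_cyl1 alpha_a ax ay.
have expand_t := same_cyl_expand lambda_ge0 expand (cyl t.+1 (ltnSn _)).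
rewrite powRN exprVn invrK.
have -> : d (F x) (F y) `^ eta * (lambda `^ eta) ^+ t.+2
    = (lambda ^+ t * d (F x) (F y)) `^ eta * (lambda `^ eta) ^+ 2.
  by rewrite powRM ?exprn_ge0 // powR_exprn // -addn2 exprD; ring.
rewrite ler_wpM2r ?exprn_ge0 ?powR_ge0 //.
rewrite ge0_ler_powR ?nnegrE ?mulr_ge0 ?exprn_ge0 //.
exact: le_trans expand_t (d_le _ _).
Qed.

Lemma normc_Vomega_sub_le_dist_F (h omega : R) a x y :
  0 <= h -> alpha a -> a x -> a y ->
  (forall p q, `|v p - v q| <= h * d p q `^ eta) ->
  Normc.normc (Vomega f r v omega x - Vomega f r v omega y)
    <= (r x)%:R * h * C0 `^ eta * d (F x) (F y) `^ eta.
Proof.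
move=> h_ge0 alpha_a ax ay v_holder.
rewrite -!mulrA -powRM ?d_ge0 //.
apply: normc_Vomega_sub_le (r_cst alpha_a ax ay) _ => l lt_lr.
apply: le_trans (v_holder _ _) _; rewrite ler_wpM2l //.
by rewrite ge0_ler_powR ?nnegrE ?mulr_ge0 ?d_ge0 // (distortion alpha_a).
Qed.

Lemma normc_Vomega_sub_div_dtheta_le (h omega : R) a x y :
  0 <= h -> alpha a -> a x -> a y ->
  (forall p q, `|v p - v q| <= h * d p q `^ eta) ->
  Normc.normc (Vomega f r v omega x - Vomega f r v omega y) / dtheta x y
    <= C0 `^ eta * M `^ eta * (lambda `^ eta) ^+ 2 * (r x)%:R * h.
Proof.
move=> h_ge0 alpha_a ax ay v_holder.
have dtheta_inv_ge0 : 0 <= (dtheta x y)^-1.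
  by rewrite invr_ge0 dtheta_ge0 ?powR_ge0.
have := normc_Vomega_sub_le_dist_F omega h_ge0 alpha_a ax ay v_holder.
move=> /(ler_wpM2r dtheta_inv_ge0) /le_trans; apply.
set c := (r x)%:R * h * C0 `^ eta.
have c_ge0 : 0 <= c by rewrite !mulr_ge0 ?ler0n ?powR_ge0.
rewrite (_ : _ / dtheta x y = c * (d (F x) (F y) `^ eta / dtheta x y)).
  rewrite (_ : _ * h = c * (M `^ eta * (lambda `^ eta) ^+ 2)).
    by rewrite ler_wpM2l // (dist_F_powR_div_dtheta_le alpha_a ax ay).
  by rewrite /c; ring.
by rewrite /c; ring.
Qed.

Lemma Dtheta_Vomega_le (C omega : R) a x0 :
  (forall x y, x <> y -> 0 < d x y) ->
  C0 `^ eta * M `^ eta * (lambda `^ eta) ^+ 2 <= C ->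
  (holder_seminorm d eta v < +oo)%E -> alpha a -> a x0 ->
  (Dtheta f r alpha (lambda `^ (- eta)) (Vomega f r v omega) a
     <= (C * (r x0)%:R)%:E * holder_seminorm d eta v)%E.
Proof.
move=> d_gt0 le_KC hs_fin alpha_a ax0.
apply: ge_ereal_sup => _ [x [y [ax ay xy ->]]].
have [h h_ge0 hsE] := holder_seminorm_real xy hs_fin.
have hs_le : (holder_seminorm d eta v <= h%:E)%E by rewrite hsE.
have v_holder := holder_le d_gt0 h_ge0 hs_le.
rewrite hsE -EFinM lee_fin (r_cst alpha_a ax0 ax).
have := normc_Vomega_sub_div_dtheta_le omega h_ge0 alpha_a ax ay v_holder.
move=> /le_trans; apply.
by rewrite ler_wpM2r // ler_wpM2r.
Qed.

End VomegaLipschitz.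

Theorem proposition3p3
  (R : realType) (dX : measure_display) (X : measurableType dX)
  (d : X -> X -> R) (m0 : probability X R) (f : X -> X)
  (Y : set X) (alpha : set (set X)) (r : X -> nat)
  (lambda eta0 C0 : R) (g : set X -> X -> R)
  (v : X -> R) (eta : R) :
  (* (X,d): locally compact dseparable bounded metric space, m0 Borel *)
  is_metric d -> dlocally_compact d -> dseparable d -> bounded_metric d ->
  (@measurable _ X) = <<s (dopen d) >> ->
  (* f nonsingular, m0 ergodic *)
  nonsingular m0 f -> ergodic m0 f ->
  (* Y, alpha, r *)
  measurable Y -> (0 < m0 Y)%E ->
  countable alpha ->
  (forall a, alpha a -> measurable a /\ a !=set0) ->
  (forall a b, alpha a -> alpha b -> a `&` b !=set0 -> a = b) ->
  \bigcup_(a in alpha) a = Y ->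
  (forall y, Y y -> (0 < r y)%N) ->
  m0.-integrable Y (fun y => (r y)%:R%:E) ->
  (forall a, alpha a -> forall x y, a x -> a y -> r x = r y) ->
  (* constants *)
  1 < lambda -> 0 < eta0 < 1 -> 1 <= C0 ->
  (* conditions (1)-(4) for each a in alpha, F = f^{r(a)} *)
  (forall a, alpha a ->
     [/\ mt_bijection m0 (Find f r) a Y,
         (forall x y, a x -> a y ->
            lambda * d x y <= d (Find f r x) (Find f r y)),
         (forall x y, a x -> a y -> forall l, (l < r x)%N ->
            d (iter l f x) (iter l f y) <= C0 * d (Find f r x) (Find f r y)) &
         [/\ is_density m0 (Find f r) a Y (g a),
             (forall y, Y y -> 0 < g a y) &
             (forall x y, Y x -> Y y ->
                `|ln (g a x) - ln (g a y)| <= C0 * (d x y) `^ eta0)]]) ->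
  (* diam(Y) <= 1 *)
  (forall x y, Y x -> Y y -> d x y <= 1) ->
  (* v is C^eta, eta in (0,1] *)
  0 < eta <= 1 -> Holder d eta v ->
  let theta := lambda `^ (- eta) in
  (forall omega, 0 <= omega <= 2 * pi ->
     locLip f r alpha theta (Vomega f r v omega)) /\
  exists2 C : R, 1 <= C &
    forall omega, 0 <= omega <= 2 * pi ->
    forall a, alpha a -> forall x0, a x0 ->
      (Dtheta f r alpha theta (Vomega f r v omega) a <=
         (C * (r x0)%:R)%:E * holder_seminorm d eta v)%E.
Proof.
move=> d_metric _ _ [M d_le] _ _ _ _ _ _ alpha_ne _ _ _ _ r_cst lambda_gt1 _
  C0_ge1 conds _ /andP[eta_gt0 _] [[Mv v_le] hs_fin] theta.
have [d_ge0 _ _ _] := d_metric.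
have C0_ge0 : 0 <= C0 := le_trans ler01 C0_ge1.
have expand a : alpha a -> forall x y, a x -> a y ->
    lambda * d x y <= d (Find f r x) (Find f r y) by case/conds.
have distortion a : alpha a -> forall x y, a x -> a y -> forall l, (l < r x)%N ->
    d (iter l f x) (iter l f y) <= C0 * d (Find f r x) (Find f r y) by case/conds.
set C := Num.max 1 (C0 `^ eta * M `^ eta * (lambda `^ eta) ^+ 2).
have C_ge1 : 1 <= C by rewrite le_max lexx.
have Dtheta_le omega a x0 : alpha a -> a x0 ->
    (Dtheta f r alpha theta (Vomega f r v omega) a
       <= (C * (r x0)%:R)%:E * holder_seminorm d eta v)%E.
  move=> alpha_a ax0.
  apply: (Dtheta_Vomega_le d_ge0 d_le lambda_gt1 eta_gt0 C0_ge0 r_cst expand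
    distortion) => //; last by rewrite le_max lexx orbT.
  by move=> x y; apply: is_metric_gt0.
split; last by exists C => // omega _ a alpha_a x0; apply: Dtheta_le.
move=> omega _ a alpha_a; have [_ [x0 ax0]] := alpha_ne a alpha_a; split.
  apply: le_lt_trans (Dtheta_le omega a x0 alpha_a ax0) _.
  apply: lte_mul_pinfty => //.
  by rewrite lee_fin mulr_ge0 ?ler0n // (le_trans ler01).
exists ((r x0)%:R * Mv) => x ax.
by rewrite (r_cst a alpha_a x0 x ax0 ax); apply: normc_Vomega_le.
Qed.
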